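(* Let $n\ge2$ and let $\epsilon,\phi>0$ with $\epsilon\phi=1$ and $\epsilon\ne1$. Then the eigenpairs of $T_{n,\epsilon,\phi}$ are exactly (up to scaling of eigenvectors) the following $n$ pairs: the outlier $\lambda=\epsilon+\epsilon^{-1}=\epsilon+\phi$ with eigenvector $\mathbf v=[\epsilon^{-i+1}]_{i=1}^n=[\phi^{i-1}]_{i=1}^n$; and, for $k=1,\ldots,n-1$, $\lambda_k=2\cos\theta_k$ with eigenvector $\mathbf v^{(k)}=[\sin(i\theta_k)-\epsilon\sin((i-1)\theta_k)]_{i=1}^n$, where $\theta_k=k\pi/n$. Equivalently, with $V_{n,\epsilon}=[\mathbf v\,|\,\mathbf v^{(1)}\,|\cdots|\,\mathbf v^{(n-1)}]$ (invertible), $T_{n,\epsilon,\phi}=V_{n,\epsilon}\,\mathrm{diag}\bigl(\epsilon+\epsilon^{-1},2\cos\tfrac{\pi}{n},\ldots,2\cos\tfrac{(n-1)\pi}{n}\bigr)V_{n,\epsilon}^{-1}$.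
   Context: $T_{n,\epsilon,\phi}$ is the real symmetric tridiagonal $n\times n$ matrix with diagonal entries $(\epsilon,0,\ldots,0,\phi)$ and all sub- and super-diagonal entries equal to $1$. An outlier is an eigenvalue not in $[-2,2]$. *)

From HB Require Import structures.
From mathcomp Require Import all_boot all_order all_algebra.
From mathcomp Require Import all_classical all_reals all_analysis.
Set Implicit Arguments. Unset Strict Implicit. Unset Printing Implicit Defensive.
Import Order.TTheory GRing.Theory Num.Theory.
Local Open Scope ring_scope.

(* Indices are 0-based: row/column i : 'I_n corresponds to the paper's i+1. *)

Definition Tmat (R : realType) (n : nat) (eps phi : R) : 'M[R]_n :=
  \matrix_(i < n, j < n)
    if i == j :> nat then
      (if i == 0%N :> nat then eps else if i == n.-1 :> nat then phi else 0)
    else if ((i.+1 == j :> nat) || (j.+1 == i :> nat)) then 1 else 0.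

Definition theta (R : realType) (n k : nat) : R := k%:R * pi / n%:R.

(* V_{n,eps} = [v | v^(1) | ... | v^(n-1)]:
   column 0: v_i = eps^{-i+1} (paper, 1-based i), i.e. eps^-1 ^+ i (0-based);
   column k >= 1: v^(k)_i = sin(i theta_k) - eps sin((i-1) theta_k). *)
Definition Vmat (R : realType) (n : nat) (eps : R) : 'M[R]_n :=
  \matrix_(i < n, j < n)
    if j == 0%N :> nat then eps^-1 ^+ i
    else sin (i.+1%:R * theta R n j) - eps * sin (i%:R * theta R n j).

Definition eigval (R : realType) (n : nat) (eps : R) (j : nat) : R :=
  if j == 0%N then eps + eps^-1 else 2 * cos (theta R n j).

Definition Dmat (R : realType) (n : nat) (eps : R) : 'M[R]_n :=
  diag_mx (\row_(j < n) eigval n eps j).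

Definition outlier (R : realType) (lam : R) : Prop := ~ (-2 <= lam <= 2).

(* A column [f_0, ..., f_{n-1}] is an eigenvector of the tridiagonal
   matrix T for lam iff f satisfies the interior recurrence f_{m+2} + f_m = lam f_{m+1}
   together with one boundary equation for the first and one for the last row.
   The geometric sequence phi^i satisfies all three for lam = eps + phi (this uses
   eps phi = 1), and the sequences sin((i+1) t) - eps sin(i t) satisfy them for
   lam = 2 cos t whenever sin(n t) = 0, i.e. for t = theta_k = k pi / n.  So every
   column of V is an eigenvector.  The n eigenvalues are pairwise distinct (the
   outlier exceeds 2 by AM-GM, cos is injective on [0, pi]), hence, T being
   symmetric, the columns of V are orthogonal; they are nonzero (their first entry
   is positive), so V is invertible.  The remaining claims -- completeness of the
   list of eigenpairs and T = V D V^-1 -- are general facts about a matrix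
   diagonalized by an invertible V with distinct eigenvalues. *)

From HB Require Import structures.
From mathcomp Require Import all_boot all_order all_algebra.
From mathcomp Require Import all_classical all_reals all_analysis.
From mathcomp Require Import ring lra.
Import Order.TTheory GRing.Theory Num.Theory.
Local Open Scope ring_scope.

Section DiagonalizationFacts.
Context {F : fieldType} {n : nat}.

Lemma symmetric_eigvec_orthogonal {A : 'M[F]_n} {u w : 'cV[F]_n} {a b : F} :
  A^T = A -> A *m u = a *: u -> A *m w = b *: w -> a != b -> u^T *m w = 0.
Proof.
move=> symA Au Aw ab.
have uAw_a : a *: (u^T *m w) = (A *m u)^T *m w by rewrite Au linearZ /= scalemxAl.
have uAw_b : b *: (u^T *m w) = (A *m u)^T *m w.
  by rewrite trmx_mul symA -mulmxA Aw scalemxAr.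
have : (a - b) *: (u^T *m w) = 0 by rewrite scalerBl uAw_a uAw_b subrr.
by move/eqP; rewrite scaler_eq0 subr_eq0 (negbTE ab) => /eqP.
Qed.

Lemma mulmx_eigencols (A V : 'M[F]_n) (d : 'I_n -> F) :
  (forall j, A *m col j V = d j *: col j V) -> A *m V = V *m diag_mx (\row_j d j).
Proof.
move=> AV; apply/matrixP => i j; rewrite mul_mx_diag !mxE.
have := congr1 (fun M : 'cV[F]_n => M i 0) (AV j); rewrite !mxE mulrC => <-.
by apply: eq_bigr => k _; rewrite mxE.
Qed.

(* If an invertible V diagonalizes A with pairwise distinct eigenvalues d, every
   eigenpair of A is, up to scaling, one of the pairs (d j, col j V): the
   coordinates of an eigenvector in the basis V vanish outside one index. *)
Lemma diagonalizable_eigenpairs (A V : 'M[F]_n) (d : 'I_n -> F) :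
    V \in unitmx -> A *m V = V *m diag_mx (\row_j d j) -> injective d ->
  forall (lam : F) (x : 'cV[F]_n), x != 0 -> A *m x = lam *: x ->
  exists j c, lam = d j /\ x = c *: col j V.
Proof.
move=> Vu AV d_inj lam x x0 Ax.
have [c xc] : exists c, x = V *m c by exists (invmx V *m x); rewrite mulKVmx.
have coord_eq j : (d j - lam) * c j 0 = 0.
  have Dc : diag_mx (\row_j d j) *m c = lam *: c.
    by rewrite -(mulKmx Vu (diag_mx _)) -AV -!mulmxA -xc Ax -scalemxAr xc mulKmx.
  have := congr1 (fun M : 'cV[F]_n => M j 0) Dc.
  by rewrite mul_diag_mx !mxE mulrBl => ->; rewrite subrr.
have [j cj0 | c0] := pickP (fun j => c j 0 != 0); last first.
  case/negP: x0; rewrite xc; apply/eqP.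
  suff -> : c = 0 by rewrite mulmx0.
  by apply/matrixP => j z; rewrite ord1 mxE; move: (c0 j) => /negbFE/eqP.
have lam_dj : lam = d j.
  by move/eqP: (coord_eq j); rewrite mulf_eq0 (negbTE cj0) orbF subr_eq0 => /eqP.
exists j, (c j 0); split => //.
have cE : c = c j 0 *: delta_mx j 0.
  apply/matrixP => k z; rewrite ord1 !mxE eqxx andbT.
  have [-> | kj] := eqVneq k j; first by rewrite mulr1.
  move/eqP: (coord_eq k); rewrite mulf_eq0 subr_eq0 lam_dj => /orP[/eqP/d_inj kj'|/eqP ->].
    by rewrite kj' eqxx in kj.
  by rewrite mulr0.
by rewrite xc {1}cE -scalemxAr -colE.
Qed.

End DiagonalizationFacts.

Lemma sqnorm_eq0 (R : realDomainType) (n : nat) (u : 'cV[R]_n) :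
  ((u^T *m u) 0 0 == 0) = (u == 0).
Proof.
rewrite mxE psumr_eq0 => [|i _]; last by rewrite mxE -expr2 sqr_ge0.
apply/allP/eqP => [u0|->]; last by move=> i _; rewrite /= trmx0 !mxE mul0r.
apply/matrixP => i z; rewrite ord1 [RHS]mxE.
by have := u0 i (mem_index_enum i); rewrite /= mxE -expr2 sqrf_eq0 => /eqP.
Qed.

(* A real square matrix with pairwise orthogonal nonzero columns is invertible:
   its Gram matrix V^T V is diagonal with nonzero diagonal entries. *)
Lemma orthogonal_columns_unitmx (R : realFieldType) (n : nat) (V : 'M[R]_n) :
  (forall j k, j != k -> (col j V)^T *m col k V = 0) ->
  (forall j, col j V != 0) -> V \in unitmx.
Proof.
move=> orth nz.
have gram_entry j k : (V^T *m V) j k = ((col j V)^T *m col k V) 0 0.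
  by rewrite !mxE; apply: eq_bigr => i _; rewrite !mxE.
have gram : V^T *m V = diag_mx (\row_j ((col j V)^T *m col j V) 0 0).
  apply/matrixP => j k; rewrite gram_entry [RHS]mxE [(\row_j0 _) 0 j]mxE.
  have [<- | jk] := eqVneq j k; first by rewrite mulr1n.
  by rewrite orth // mxE mulr0n.
have : \det (V^T *m V) != 0.
  rewrite gram det_diag; apply/prodf_neq0 => j _.
  by rewrite mxE sqnorm_eq0 nz.
by rewrite det_mulmx det_tr mulf_eq0 orbb unitmxE unitfE.
Qed.

Lemma sum_ord_delta (S : pzSemiRingType) (n a : nat) (f : nat -> S) :
  \sum_(k < n) ((k : nat) == a)%:R * f k = (a < n)%:R * f a.
Proof.
elim: n => [|n IH]; first by rewrite big_ord0 ltn0 mul0r.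
rewrite big_ord_recr /= IH.
case: (ltngtP a n) => [a_lt_n | n_lt_a | ->].
- by rewrite ltnS (ltnW a_lt_n) mul0r addr0.
- by rewrite ltnS leqNgt n_lt_a /= !mul0r addr0.
- by rewrite ltnSn mul0r add0r.
Qed.

Lemma sum_ord_delta_pred (S : pzSemiRingType) (n i : nat) (f : nat -> S) :
  (i < n)%N -> \sum_(k < n) ((k.+1 : nat) == i)%:R * f k = (0 < i)%:R * f i.-1.
Proof.
case: i => [|i] i_lt_n; first by rewrite big1 ?mul0r // => k _; rewrite mul0r.
rewrite (eq_bigr (fun k : 'I_n => ((k : nat) == i)%:R * f k)) => [|k _].
  by rewrite sum_ord_delta (ltnW i_lt_n).
by rewrite eqSS.
Qed.

Section TridiagonalSpectrum.
Context {R : realType}.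
Implicit Types (n : nat) (eps phi : R).

Lemma sin_three_term (x : R) (m : nat) :
  sin (m.+2%:R * x) + sin (m%:R * x) = 2 * cos x * sin (m.+1%:R * x).
Proof.
have -> : m.+2%:R * x = m.+1%:R * x + x by rewrite -[m.+2]addn1 natrD; ring.
have -> : m%:R * x = m.+1%:R * x - x by rewrite -[m.+1]addn1 natrD; ring.
by rewrite sinD sinB; ring.
Qed.

Lemma sin_natr_pi (k : nat) : sin (k%:R * pi) = 0 :> R.
Proof.
elim: k => [|k IH]; first by rewrite mul0r sin0.
by rewrite -addn1 natrD mulrDl mul1r sinDpi IH oppr0.
Qed.

(* n theta_k = k pi, so sin (n theta_k) = 0: the boundary condition at the last row. *)
Lemma sin_n_theta n (k : nat) : (0 < n)%N -> sin (n%:R * theta R n k) = 0.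
Proof.
move=> n_gt0; suff -> : n%:R * theta R n k = k%:R * pi by exact: sin_natr_pi.
by rewrite /theta; field; rewrite pnatr_eq0 -lt0n.
Qed.

Lemma theta_in_open_0pi {n} {k : nat} :
  (0 < k)%N -> (k < n)%N -> 0 < theta R n k < pi.
Proof.
move=> k_gt0 k_lt_n; rewrite /theta.
have n_gt0 : (0 : R) < n%:R by rewrite ltr0n (leq_trans k_gt0 (ltnW k_lt_n)).
apply/andP; split; first by rewrite divr_gt0 // mulr_gt0 ?pi_gt0 // ltr0n.
by rewrite ltr_pdivrMr // mulrC ltr_pM2l ?pi_gt0 // ltr_nat.
Qed.

Definition Tdiag n eps phi (i : nat) : R :=
  if i == 0%N then eps else if i == n.-1 then phi else 0.

Lemma Tmat_mul_col n eps phi (f : nat -> R) (i : 'I_n) :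
  (Tmat n eps phi *m \col_(k < n) f k) i 0 =
  Tdiag n eps phi i * f i + (i.+1 < n)%:R * f i.+1 + (0 < i)%:R * f i.-1.
Proof.
rewrite mxE (eq_bigr (fun k : 'I_n => ((k : nat) == i)%:R * (Tdiag n eps phi i * f k)
   + ((k : nat) == i.+1)%:R * f k + ((k.+1 : nat) == i)%:R * f k)); last first.
  move=> k _; rewrite !mxE /Tdiag eq_sym.
  have [-> | k_neq_i] := eqVneq (k : nat) i.
    by rewrite (ltn_eqF (ltnSn i)) (gtn_eqF (ltnSn i)) !mul0r !addr0 mul1r.
  rewrite mul0r add0r (eq_sym (k : nat)).
  have [<- | _] /= := eqVneq i.+1 (k : nat).
    by rewrite (gtn_eqF (leqnSn i.+1)) mul0r addr0 mul1r.
  by case: (k.+1 == i :> nat); rewrite ?mul1r ?mul0r ?add0r ?addr0.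
rewrite !big_split /= (sum_ord_delta _ _ _ (fun k => Tdiag n eps phi i * f k)).
by rewrite sum_ord_delta sum_ord_delta_pred // ltn_ord mul1r.
Qed.

Lemma Tmat_eigen_rec (p : nat) eps phi (lam : R) (f : nat -> R) :
  eps * f 0%N + f 1%N = lam * f 0%N ->
  (forall m, (m < p)%N -> f m.+2 + f m = lam * f m.+1) ->
  phi * f p.+1 + f p = lam * f p.+1 ->
  Tmat p.+2 eps phi *m (\col_(k < p.+2) f k) = lam *: \col_(k < p.+2) f k.
Proof.
move=> first_row interior last_row.
apply/matrixP => i z; rewrite ord1 Tmat_mul_col !mxE /Tdiag /=.
case: i => [[|m] /= i_lt]; first by rewrite mul1r mul0r addr0.
rewrite mul1r; have [m_eq_p | m_neq_p] := eqVneq m p.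
  by rewrite m_eq_p ltnn eqxx mul0r addr0.
have m_lt_p : (m < p)%N by rewrite ltn_neqAle m_neq_p -ltnS.
by rewrite eqSS (negbTE m_neq_p) ltnS ltnS m_lt_p mul0r add0r mul1r interior.
Qed.

Lemma geometric_col_eigen (p : nat) eps phi : eps * phi = 1 ->
  Tmat p.+2 eps phi *m (\col_(i < p.+2) phi ^+ i) =
  (eps + phi) *: \col_(i < p.+2) phi ^+ i.
Proof.
move=> eps_phi.
have geom m : phi ^+ m.+2 + phi ^+ m = (eps + phi) * phi ^+ m.+1.
  have -> : (eps + phi) * phi ^+ m.+1 = eps * phi * phi ^+ m + phi ^+ m.+2.
    by rewrite !exprS; ring.
  by rewrite eps_phi mul1r addrC.
apply: Tmat_eigen_rec => [|m _|]; rewrite ?geom //.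
by rewrite expr0 expr1; ring.
Qed.

(* The bulk eigenvectors: for any x with sin ((p+2) x) = 0, the sequence
   sin ((i+1) x) - eps sin (i x) satisfies the recurrence with lam = 2 cos x;
   the first row uses sin 0 = 0, the last one sin ((p+2) x) = 0 and eps phi = 1. *)
Lemma sine_col_eigen (p : nat) eps phi (x : R) :
    eps * phi = 1 -> sin (p.+2%:R * x) = 0 ->
  let v := \col_(i < p.+2) (sin (i.+1%:R * x) - eps * sin (i%:R * x)) in
  Tmat p.+2 eps phi *m v = (2 * cos x) *: v.
Proof.
move=> eps_phi sin_end v.
pose s m := sin (m%:R * x).
have rec m : s m.+2 = 2 * cos x * s m.+1 - s m.
  by rewrite -(sin_three_term x m) addrK.
have s0 : s 0%N = 0 by rewrite /s mul0r sin0.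
apply: (Tmat_eigen_rec _ _ _ _ (fun i => s i.+1 - eps * s i)) => [|m _|].
- by rewrite rec s0; ring.
- by rewrite !rec; ring.
- have s_end : s p.+2 = 0 := sin_end.
  have s_p : s p = 2 * cos x * s p.+1 - s p.+2 by rewrite rec; ring.
  rewrite s_p s_end.
  have -> : phi * (0 - eps * s p.+1) = - (eps * phi) * s p.+1 by ring.
  by rewrite eps_phi; ring.
Qed.

Lemma Vmat_col_eigen {n eps phi} (j : 'I_n) : (2 <= n)%N -> eps * phi = 1 ->
  Tmat n eps phi *m col j (Vmat n eps) = eigval n eps j *: col j (Vmat n eps).
Proof.
case: n j => [|[|p]] // j _ eps_phi; rewrite /eigval.
have [j0 | j_neq0] := eqVneq (j : nat) 0%N.
  have -> : col j (Vmat p.+2 eps) = \col_(i < p.+2) phi ^+ i.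
    by apply/matrixP => i z; rewrite !mxE j0 (mulr1_eq eps_phi).
  by rewrite (mulr1_eq eps_phi); exact: geometric_col_eigen.
have -> : col j (Vmat p.+2 eps) = \col_(i < p.+2)
    (sin (i.+1%:R * theta R p.+2 j) - eps * sin (i%:R * theta R p.+2 j)).
  by apply/matrixP => i z; rewrite !mxE (negbTE j_neq0).
by apply: sine_col_eigen => //; exact: sin_n_theta.
Qed.

(* The outlier: by AM-GM, eps + 1/eps > 2 for positive eps != 1. *)
Lemma outlier_gt2 {eps} : 0 < eps -> eps != 1 -> 2 < eps + eps^-1.
Proof.
move=> eps_gt0 eps_neq1; rewrite -subr_gt0.
have -> : eps + eps^-1 - 2 = (eps - 1) ^+ 2 / eps by field; rewrite lt0r_neq0.
by rewrite divr_gt0 // lt0r sqrf_eq0 subr_eq0 eps_neq1 sqr_ge0.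
Qed.

Lemma theta_inj {n} {j k : nat} : (0 < n)%N -> theta R n j = theta R n k -> j = k.
Proof.
move=> n_gt0; have pi_n_neq0 : pi / n%:R != 0 :> R.
  by rewrite mulf_neq0 ?invr_eq0 ?pnatr_eq0 -?lt0n // lt0r_neq0 // pi_gt0.
by rewrite /theta -!mulrA => /(mulIf pi_n_neq0) /eqP; rewrite eqr_nat => /eqP.
Qed.

(* The n eigenvalues are pairwise distinct: the outlier exceeds 2 >= 2 cos theta_k,
   and cos is injective on [0, pi], which contains all theta_k. *)
Lemma eigval_inj {n eps} : 0 < eps -> eps != 1 ->
  injective (fun j : 'I_n => eigval n eps j).
Proof.
move=> eps_gt0 eps_neq1 j k; rewrite /eigval.
have outlier := outlier_gt2 eps_gt0 eps_neq1.
have [j0 | j_neq0] := eqVneq (j : nat) 0%N;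
  have [k0 | k_neq0] := eqVneq (k : nat) 0%N.
- by move=> _; apply: ord_inj; rewrite j0 k0.
- by move=> eq_jk; exfalso; have := cos_le1 (theta R n k); lra.
- by move=> eq_jk; exfalso; have := cos_le1 (theta R n j); lra.
have theta_ok (i : 'I_n) : (i : nat) != 0%N -> theta R n i \in `[0, pi].
  rewrite -lt0n => i_gt0.
  have /andP[gt0 ltpi] := theta_in_open_0pi i_gt0 (ltn_ord i).
  by rewrite in_itv /= !ltW.
have two_neq0 : (2 : R) != 0 by rewrite pnatr_eq0.
move=> /(mulfI two_neq0) eq_cos; apply: ord_inj.
apply: (theta_inj (leq_ltn_trans (leq0n j) (ltn_ord j))).
exact: cos_inj (theta_ok j j_neq0) (theta_ok k k_neq0) eq_cos.
Qed.

(* Row 0 of V_{n,eps} is positive: eps^0 = 1 and sin theta_k > 0 for 0 < k < n;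
   in particular no column of V is zero. *)
Lemma Vmat_col_neq0 {n eps} (j : 'I_n) : col j (Vmat n eps) != 0.
Proof.
have n_gt0 : (0 < n)%N by apply: leq_ltn_trans (ltn_ord j).
apply/eqP => /matrixP /(_ (Ordinal n_gt0) 0); rewrite !mxE /=.
have [_ | j_neq0] := eqVneq (j : nat) 0%N; first by rewrite expr0; apply/eqP; rewrite oner_neq0.
rewrite mul0r sin0 mulr0 subr0 mul1r => sin_theta0.
have j_gt0 : (0 < j)%N by rewrite lt0n.
have := sin_gt0_pi (theta_in_open_0pi j_gt0 (ltn_ord j)).
by rewrite sin_theta0 ltxx.
Qed.

Lemma Tmat_sym n eps phi : (Tmat n eps phi)^T = Tmat n eps phi.
Proof.
apply/matrixP => i j; rewrite !mxE.
have [-> // | i_neq_j] := eqVneq i j.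
by rewrite eq_sym (negbTE (i_neq_j : (i : nat) != j)) orbC.
Qed.

(* V_{n,eps} is invertible: its columns are eigenvectors of the symmetric matrix
   T_{n,eps,phi} for pairwise distinct eigenvalues, hence orthogonal, and nonzero. *)
Lemma Vmat_unit {n eps phi} : (2 <= n)%N -> 0 < eps -> eps != 1 -> eps * phi = 1 ->
  Vmat n eps \in unitmx.
Proof.
move=> n_ge2 eps_gt0 eps_neq1 eps_phi.
apply: orthogonal_columns_unitmx Vmat_col_neq0 => j k j_neq_k.
apply: (symmetric_eigvec_orthogonal (Tmat_sym n eps phi)
  (Vmat_col_eigen j n_ge2 eps_phi) (Vmat_col_eigen k n_ge2 eps_phi)).
by apply: contra j_neq_k => /eqP /(eigval_inj eps_gt0 eps_neq1) ->.
Qed.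

End TridiagonalSpectrum.

Theorem mainTheorem11 (R : realType) (n : nat) (eps phi : R) :
  (2 <= n)%N -> 0 < eps -> 0 < phi -> eps * phi = 1 -> eps != 1 ->
  [/\ (* the outlier eigenvalue and its eigenvector v = [phi^(i-1)] *)
      eps + eps^-1 = eps + phi /\ outlier (eps + eps^-1),
      (forall i j : 'I_n, (j == 0%N :> nat) -> Vmat n eps i j = phi ^+ i),
      (* each column of V is an eigenvector for the corresponding eigenvalue *)
      (forall j : 'I_n, col j (Vmat n eps) != 0 /\
         Tmat n eps phi *m col j (Vmat n eps) = eigval n eps j *: col j (Vmat n eps)),
      (* these are all the eigenpairs, up to scaling *)
      (forall (lam : R) (x : 'cV[R]_n), x != 0 -> Tmat n eps phi *m x = lam *: x ->
         exists (j : 'I_n) (c : R), lam = eigval n eps j /\ x = c *: col j (Vmat n eps))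
    & (* diagonalization *)
      Vmat n eps \in unitmx /\
      Tmat n eps phi = Vmat n eps *m Dmat n eps *m invmx (Vmat n eps)].
Proof.
move=> n_ge2 eps_gt0 _ eps_phi eps_neq1.
have inv_eps : eps^-1 = phi := mulr1_eq eps_phi.
have V_unit := Vmat_unit n_ge2 eps_gt0 eps_neq1 eps_phi.
have TV : Tmat n eps phi *m Vmat n eps = Vmat n eps *m Dmat n eps.
  exact: mulmx_eigencols (fun j => Vmat_col_eigen j n_ge2 eps_phi).
split.
- split; first by rewrite inv_eps.
  by rewrite /outlier => /andP[_ le2]; have := outlier_gt2 eps_gt0 eps_neq1; lra.
- by move=> i j j0; rewrite mxE j0 inv_eps.
- by move=> j; split; [exact: Vmat_col_neq0 | exact: Vmat_col_eigen].
- exact: diagonalizable_eigenpairs V_unit TV (eigval_inj eps_gt0 eps_neq1).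
- by split => //; rewrite -TV mulmxK.
Qed.
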